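(* There exist a financial system $S$ in the base model (all contracts of the same priority) and banks $u\neq v$ with a debt contract from $u$ to $v$ of positive weight, such that: $S$ has exactly one solution $r$; the system $S'$ obtained from $S$ by deleting this debt contract (everything else unchanged) has exactly one solution $r'$; and $q'_v(r')>q_v(r)$, where $q_v$ and $q'_v$ denote the payoff of $v$ in $S$ and $S'$, respectively.
   Context: A financial system with payment priorities consists of: a finite set $V$ of banks; external assets $e_v\ge 0$ for each $v\in V$; a number $P\ge 1$ of priority levels; and a finite set of contracts, each of which is either a debt contract from a debtor $u$ to a creditor $v\neq u$ with weight $c>0$, or a credit default swap (CDS) from a debtor $u$ to a creditor $v\neq u$ in reference to a bank $w\notin\{u,v\}$ (the reference entity) with weight $c>0$. Every contract has a priority in $\{1,\dots,P\}$ (1 is the highest priority). It is assumed that every bank that is the reference entity of some CDS is the debtor of at least one debt contract of positive weight. Given a recovery rate vector $r\in[0,1]^V$: the liability of a contract $k$ is $l_k(r)=c$ if $k$ is a debt of weight $c$, and $l_k(r)=c\,(1-r_w)$ if $k$ is a CDS of weight $c$ in reference to $w$. For a bank $v$, $l_v(r)$ is the sum of the liabilities of the contracts with debtor $v$; $l_v^{(\rho)}(r)$ is the sum of the liabilities of contracts with debtor $v$ and priority $\rho$; and $l_v^{(\le\rho)}(r)=\sum_{i=1}^{\rho}l_v^{(i)}(r)$ (with $l_v^{(\le 0)}=0$). The payment on a contract $k$ with debtor $v$ and priority $\rho$ is $p_k(r)=l_k(r)\cdot\min\{1,\max\{0,(r_v l_v(r)-l_v^{(\le\rho-1)}(r))/l_v^{(\rho)}(r)\}\}$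 (and $p_k(r)=0$ if $l_v^{(\rho)}(r)=0$). The assets of $v$ are $a_v(r)=e_v+\sum_k p_k(r)$, summing over contracts $k$ with creditor $v$. A vector $r\in[0,1]^V$ is a solution (clearing vector) if for every $v\in V$: $r_v=1$ when $a_v(r)\ge l_v(r)$, and $r_v=a_v(r)/l_v(r)$ when $a_v(r)<l_v(r)$. The payoff of $v$ is $q_v(r)=\max\{a_v(r)-l_v(r),0\}$. When $P=1$, payments reduce to $p_k(r)=r_v\,l_k(r)$ (principle of proportionality); this is called the base model. *)

From Stdlib Require Import Reals Lra List Arith.
Import ListNotations.
Open Scope R_scope.

(* Banks are the natural numbers 0, ..., nbanks-1. *)
Inductive ckind : Type :=
  | Debt : ckind
  | CDS : nat -> ckind.          (* CDS in reference to the given bank *)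

Record contract : Type := mkContract {
  debtor : nat;
  creditor : nat;
  kind : ckind;
  weight : R;
  prio : nat }.

Record system : Type := mkSystem {
  nbanks : nat;
  ext : nat -> R;
  nprio : nat;
  contracts : list contract }.

Definition sumR (l : list R) : R := fold_right Rplus 0 l.

Definition wf_system (S : system) : Prop :=
  (1 <= nprio S)%nat /\
  (forall v, (v < nbanks S)%nat -> 0 <= ext S v) /\
  (forall k, In k (contracts S) ->
     (debtor k < nbanks S)%nat /\ (creditor k < nbanks S)%nat /\
     debtor k <> creditor k /\ 0 < weight k /\
     (1 <= prio k <= nprio S)%nat /\
     (forall w, kind k = CDS w ->
        (w < nbanks S)%nat /\ w <> debtor k /\ w <> creditor k /\
        exists k', In k' (contracts S) /\ debtor k' = w /\
                   kind k' = Debt /\ 0 < weight k')).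

Definition base_model (S : system) : Prop := nprio S = 1%nat.

Section Clearing.
Variable S : system.
Variable r : nat -> R.

Definition liab (k : contract) : R :=
  match kind k with
  | Debt => weight k
  | CDS w => weight k * (1 - r w)
  end.

Definition liab_bank (v : nat) : R :=
  sumR (map liab (filter (fun k => Nat.eqb (debtor k) v) (contracts S))).

Definition liab_prio (v rho : nat) : R :=
  sumR (map liab (filter (fun k => andb (Nat.eqb (debtor k) v) (Nat.eqb (prio k) rho))
                         (contracts S))).

Definition liab_le (v rho : nat) : R :=
  sumR (map (liab_prio v) (seq 1 rho)).

Definition payment (k : contract) : R :=
  let v := debtor k in
  let rho := prio k in
  if Req_EM_T (liab_prio v rho) 0 then 0
  else liab k * Rmin 1 (Rmax 0 ((r v * liab_bank v - liab_le v (rho - 1))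
                                 / liab_prio v rho)).

Definition assets (v : nat) : R :=
  ext S v + sumR (map payment (filter (fun k => Nat.eqb (creditor k) v)
                                      (contracts S))).

Definition payoff (v : nat) : R := Rmax (assets v - liab_bank v) 0.

End Clearing.

Definition is_solution (S : system) (r : nat -> R) : Prop :=
  forall v, (v < nbanks S)%nat ->
    0 <= r v <= 1 /\
    (assets S r v >= liab_bank S r v -> r v = 1) /\
    (assets S r v < liab_bank S r v -> r v = assets S r v / liab_bank S r v).

Definition unique_solution (S : system) (r : nat -> R) : Prop :=
  is_solution S r /\
  forall r', is_solution S r' -> forall v, (v < nbanks S)%nat -> r' v = r v.

(* Bank 0 owes 1 to bank 1 and 1 to bank 2, but holds only 1 unit; bank 1
   has sold bank 2 a CDS of weight 2 on bank 0.  With the debt 0 -> 1 in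
   place, bank 0 recovers only 1/2, so bank 1 receives 1/2 but must pay
   2 * (1 - 1/2) = 1 on the CDS, keeping 1/2.  Deleting that debt makes
   bank 0 solvent, the CDS pays nothing, and bank 1 keeps its whole unit.
   In the base model payments are proportional, p_k = r_debtor * l_k, so
   each clearing condition reads r_v = clearing_ratio a_v l_v and the
   solutions are computed bank by bank (0, then 1, then 2), which also
   proves their uniqueness. *)

From Stdlib Require Import Reals List Lra Lia Psatz.
Import ListNotations.
Open Scope R_scope.

Lemma sumR_nonneg (l : list R) : (forall x, In x l -> 0 <= x) -> 0 <= sumR l.
Proof.
  induction l as [|a l IH]; intros Hl; simpl; [lra|].
  assert (0 <= a) by (apply Hl; left; reflexivity).
  assert (0 <= sumR l) by (apply IH; intros x Hx; apply Hl; right; exact Hx).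
  lra.
Qed.

Lemma sumR_eq0_nonneg (l : list R) :
  (forall x, In x l -> 0 <= x) -> sumR l = 0 -> forall x, In x l -> x = 0.
Proof.
  induction l as [|a l IH]; intros Hl Hsum x Hx; [destruct Hx|].
  assert (0 <= a) by (apply Hl; left; reflexivity).
  assert (0 <= sumR l) by (apply sumR_nonneg; intros y Hy; apply Hl; right; exact Hy).
  simpl in Hsum.
  destruct Hx as [<-|Hx]; [lra|].
  apply IH; [intros y Hy; apply Hl; right; exact Hy|lra|exact Hx].
Qed.

Section BaseModel.
Variable S : system.
Hypothesis S_wf : wf_system S.
Hypothesis S_base : base_model S.
Variable r : nat -> R.
Hypothesis r_range : forall v, (v < nbanks S)%nat -> 0 <= r v <= 1.

Lemma liab_nonneg k : In k (contracts S) -> 0 <= liab r k.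
Proof.
  intros Hk. destruct S_wf as (_ & _ & Hc).
  destruct (Hc k Hk) as (_ & _ & _ & Hw & _ & Hcds).
  unfold liab. destruct (kind k) as [|w] eqn:Ek; [lra|].
  destruct (Hcds w eq_refl) as (Hw_lt & _).
  destruct (r_range w Hw_lt). apply Rmult_le_pos; lra.
Qed.

Lemma prio_base k : In k (contracts S) -> prio k = 1%nat.
Proof.
  intros Hk. destruct S_wf as (_ & _ & Hc).
  destruct (Hc k Hk) as (_ & _ & _ & _ & Hp & _).
  unfold base_model in S_base. lia.
Qed.

Lemma liab_prio_base v : liab_prio S r v 1 = liab_bank S r v.
Proof.
  unfold liab_prio, liab_bank. do 2 f_equal.
  apply filter_ext_in. intros k Hk.
  rewrite (prio_base k Hk), Bool.andb_true_r. reflexivity.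
Qed.

Lemma payment_base k :
  In k (contracts S) -> payment S r k = r (debtor k) * liab r k.
Proof.
  intros Hk. unfold payment. rewrite (prio_base k Hk), liab_prio_base.
  change (liab_le S r (debtor k) (1 - 1)) with 0.
  set (L := liab_bank S r (debtor k)).
  destruct (Req_EM_T L 0) as [HL|HL].
  (* The payment is then 0 by convention; so is l_k, a nonnegative summand of L. *)
  - assert (Hin : In (liab r k) (map (liab r)
        (filter (fun k' => Nat.eqb (debtor k') (debtor k)) (contracts S)))).
    { apply in_map, filter_In. split; [exact Hk|apply Nat.eqb_refl]. }
    assert (Hnonneg : forall x, In x (map (liab r)
        (filter (fun k' => Nat.eqb (debtor k') (debtor k)) (contracts S))) -> 0 <= x).
    { intros x Hx. apply in_map_iff in Hx as (k' & <- & Hk').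
      apply filter_In in Hk' as [Hk' _]. exact (liab_nonneg k' Hk'). }
    rewrite (sumR_eq0_nonneg _ Hnonneg HL _ Hin). ring.
  - assert (Hd : (debtor k < nbanks S)%nat)
      by (destruct S_wf as (_ & _ & Hc); exact (proj1 (Hc k Hk))).
    destruct (r_range (debtor k) Hd).
    replace ((r (debtor k) * L - 0) / L) with (r (debtor k)) by (field; exact HL).
    unfold Rmax, Rmin.
    destruct (Rle_dec 0 (r (debtor k))), (Rle_dec 1 (r (debtor k))); try lra.
    replace (r (debtor k)) with 1 by lra. ring.
Qed.

Lemma assets_base v :
  assets S r v = ext S v + sumR (map (fun k => r (debtor k) * liab r k)
                   (filter (fun k => Nat.eqb (creditor k) v) (contracts S))).
Proof.
  unfold assets. do 2 f_equal. apply map_ext_in. intros k Hk.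
  apply filter_In in Hk as [Hk _]. exact (payment_base k Hk).
Qed.
End BaseModel.

Lemma solution_range S r : is_solution S r -> forall v, (v < nbanks S)%nat -> 0 <= r v <= 1.
Proof. intros Hr v Hv. exact (proj1 (Hr v Hv)). Qed.

Definition clearing_ratio (a l : R) : R := if Rle_dec l a then 1 else a / l.

Lemma clearing_ratio_solvent a l : l <= a -> clearing_ratio a l = 1.
Proof. intros H. unfold clearing_ratio. destruct (Rle_dec l a); [reflexivity|lra]. Qed.

Lemma clearing_ratio_default a l : a < l -> clearing_ratio a l = a / l.
Proof. intros H. unfold clearing_ratio. destruct (Rle_dec l a); [lra|reflexivity]. Qed.

Lemma solution_clearing_ratio S r v :
  is_solution S r -> (v < nbanks S)%nat ->
  r v = clearing_ratio (assets S r v) (liab_bank S r v).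
Proof.
  intros Hr Hv. destruct (Hr v Hv) as (_ & Hge & Hlt).
  unfold clearing_ratio. destruct (Rle_dec (liab_bank S r v) (assets S r v)).
  - apply Hge. lra.
  - apply Hlt. lra.
Qed.

Lemma is_solution_clearing_ratio S r :
  (forall v, (v < nbanks S)%nat ->
     0 <= assets S r v /\ 0 <= liab_bank S r v /\
     r v = clearing_ratio (assets S r v) (liab_bank S r v)) ->
  is_solution S r.
Proof.
  intros Hr v Hv. destruct (Hr v Hv) as (Ha & Hl & ->).
  unfold clearing_ratio.
  destruct (Rle_dec (liab_bank S r v) (assets S r v)) as [Hle|Hgt].
  - repeat split; intros; lra.
  - assert (Hq : assets S r v / liab_bank S r v * liab_bank S r v = assets S r v)
      by (field; lra).
    assert (0 <= assets S r v / liab_bank S r v < 1) by (split; nra).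
    repeat split; intros; lra.
Qed.

Definition ext_ex (v : nat) : R := match v with 0%nat | 1%nat => 1 | _ => 0 end.
Definition debt01 := mkContract 0 1 Debt 1 1.
Definition debt02 := mkContract 0 2 Debt 1 1.
Definition cds12 := mkContract 1 2 (CDS 0) 2 1.
Definition S_full := mkSystem 3 ext_ex 1 [debt01; debt02; cds12].
Definition S_cut := mkSystem 3 ext_ex 1 [debt02; cds12].

Ltac prove_wf_example :=
  split; [simpl; lia|split];
  [ intros [|[|[|v]]] Hv; simpl in *; lra || lia
  | intros k Hk; simpl in Hk;
    repeat (destruct Hk as [<-|Hk]); [..|destruct Hk];
    repeat split; simpl; try lia; try lra;
    match goal with Hw : _ = CDS _ |- _ => discriminate Hw || injection Hw as <- end;
    try lia; exists debt02; simpl; auto with real ].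

Lemma S_full_wf : wf_system S_full.
Proof. prove_wf_example. Qed.

Lemma S_cut_wf : wf_system S_cut.
Proof. prove_wf_example. Qed.

Section Example.
Variable r : nat -> R.
Hypothesis r_range : forall v, (v < 3)%nat -> 0 <= r v <= 1.

Lemma S_full_balance :
  assets S_full r 0 = 1 /\ liab_bank S_full r 0 = 2 /\
  assets S_full r 1 = 1 + r 0%nat /\ liab_bank S_full r 1 = 2 * (1 - r 0%nat) /\
  assets S_full r 2 = r 0%nat + 2 * r 1%nat * (1 - r 0%nat) /\ liab_bank S_full r 2 = 0.
Proof.
  rewrite !(assets_base S_full S_full_wf eq_refl r r_range).
  unfold liab_bank, liab; simpl; repeat split; ring.
Qed.

Lemma S_cut_balance :
  assets S_cut r 0 = 1 /\ liab_bank S_cut r 0 = 1 /\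
  assets S_cut r 1 = 1 /\ liab_bank S_cut r 1 = 2 * (1 - r 0%nat) /\
  assets S_cut r 2 = r 0%nat + 2 * r 1%nat * (1 - r 0%nat) /\ liab_bank S_cut r 2 = 0.
Proof.
  rewrite !(assets_base S_cut S_cut_wf eq_refl r r_range).
  unfold liab_bank, liab; simpl; repeat split; ring.
Qed.
End Example.

Definition r_full (v : nat) : R := if Nat.eqb v 0 then 1 / 2 else 1.
Definition r_cut (_ : nat) : R := 1.

Lemma r_full_range v : (v < 3)%nat -> 0 <= r_full v <= 1.
Proof. intros _. unfold r_full. destruct (Nat.eqb v 0); lra. Qed.

Lemma r_cut_range v : (v < 3)%nat -> 0 <= r_cut v <= 1.
Proof. intros _. unfold r_cut. lra. Qed.

Lemma S_full_solution_values r :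
  is_solution S_full r -> r 0%nat = 1 / 2 /\ r 1%nat = 1 /\ r 2%nat = 1.
Proof.
  intros Hr.
  destruct (S_full_balance r (solution_range S_full r Hr)) as (A0 & L0 & A1 & L1 & A2 & L2).
  pose proof (solution_clearing_ratio S_full r 0 Hr ltac:(simpl; lia)) as E0.
  pose proof (solution_clearing_ratio S_full r 1 Hr ltac:(simpl; lia)) as E1.
  pose proof (solution_clearing_ratio S_full r 2 Hr ltac:(simpl; lia)) as E2.
  rewrite A0, L0, clearing_ratio_default in E0 by lra.
  rewrite A1, L1, E0, clearing_ratio_solvent in E1 by lra.
  rewrite A2, L2, E0, E1, clearing_ratio_solvent in E2 by lra.
  repeat split; lra.
Qed.

Lemma S_cut_solution_values r :
  is_solution S_cut r -> r 0%nat = 1 /\ r 1%nat = 1 /\ r 2%nat = 1.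
Proof.
  intros Hr.
  destruct (S_cut_balance r (solution_range S_cut r Hr)) as (A0 & L0 & A1 & L1 & A2 & L2).
  pose proof (solution_clearing_ratio S_cut r 0 Hr ltac:(simpl; lia)) as E0.
  pose proof (solution_clearing_ratio S_cut r 1 Hr ltac:(simpl; lia)) as E1.
  pose proof (solution_clearing_ratio S_cut r 2 Hr ltac:(simpl; lia)) as E2.
  rewrite A0, L0, clearing_ratio_solvent in E0 by lra.
  rewrite A1, L1, E0, clearing_ratio_solvent in E1 by lra.
  rewrite A2, L2, E0, E1, clearing_ratio_solvent in E2 by lra.
  repeat split; lra.
Qed.

Lemma S_full_unique_solution : unique_solution S_full r_full.
Proof.
  split.
  - apply is_solution_clearing_ratio. simpl. intros v Hv.
    destruct (S_full_balance r_full r_full_range) as (A0 & L0 & A1 & L1 & A2 & L2).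
    unfold r_full in *; simpl in *.
    destruct v as [|[|[|v]]]; try lia.
    + rewrite A0, L0, clearing_ratio_default by lra. repeat split; lra.
    + rewrite A1, L1, clearing_ratio_solvent by lra. repeat split; lra.
    + rewrite A2, L2, clearing_ratio_solvent by lra. repeat split; lra.
  - intros r Hr v Hv. destruct (S_full_solution_values r Hr) as (E0 & E1 & E2).
    simpl in Hv. destruct v as [|[|[|v]]]; try lia; assumption.
Qed.

Lemma S_cut_unique_solution : unique_solution S_cut r_cut.
Proof.
  split.
  - apply is_solution_clearing_ratio. simpl. intros v Hv.
    destruct (S_cut_balance r_cut r_cut_range) as (A0 & L0 & A1 & L1 & A2 & L2).
    unfold r_cut in *.
    destruct v as [|[|[|v]]]; try lia.
    + rewrite A0, L0, clearing_ratio_solvent by lra. repeat split; lra.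
    + rewrite A1, L1, clearing_ratio_solvent by lra. repeat split; lra.
    + rewrite A2, L2, clearing_ratio_solvent by lra. repeat split; lra.
  - intros r Hr v Hv. destruct (S_cut_solution_values r Hr) as (E0 & E1 & E2).
    simpl in Hv. destruct v as [|[|[|v]]]; try lia; assumption.
Qed.

Lemma payoff_gain : payoff S_cut r_cut 1 > payoff S_full r_full 1.
Proof.
  destruct (S_full_balance r_full r_full_range) as (_ & _ & A1 & L1 & _).
  destruct (S_cut_balance r_cut r_cut_range) as (_ & _ & A1' & L1' & _).
  unfold payoff. rewrite A1, L1, A1', L1'. unfold r_full, r_cut; simpl.
  unfold Rmax. destruct (Rle_dec _ 0), (Rle_dec _ 0); lra.
Qed.

Theorem mainTheorem2 :
  exists (n : nat) (e : nat -> R) (l1 l2 : list contract)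
         (u v : nat) (c : R) (rho : nat),
    let S := mkSystem n e 1 (l1 ++ mkContract u v Debt c rho :: l2) in
    let S' := mkSystem n e 1 (l1 ++ l2) in
    wf_system S /\ base_model S /\ wf_system S' /\
    u <> v /\ 0 < c /\
    exists r r',
      unique_solution S r /\ unique_solution S' r' /\
      payoff S' r' v > payoff S r v.
Proof.
  exists 3%nat, ext_ex, [], [debt02; cds12], 0%nat, 1%nat, 1, 1%nat.
  split; [exact S_full_wf|].
  split; [reflexivity|].
  split; [exact S_cut_wf|].
  split; [lia|split; [lra|]].
  exists r_full, r_cut.
  split; [exact S_full_unique_solution|].
  split; [exact S_cut_unique_solution|].
  exact payoff_gain.
Qed.
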